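(* Let $n$ and $k$ be even integers with $1\le k<n/2$. If $n\neq 4k$, then $C(n,k)=\langle\rho,\delta,\beta\rangle\cong \mathrm{D}_{2n}\times\mathbb{Z}_2$. If $n=4k$, then $C(n,k)=\langle\rho,\delta,\beta,\theta\rangle$.
   Context: $\mathrm{DGP}(n,k)$ ($1\le k<n/2$) is the graph with vertex set $\{(u_i,j),(v_i,j): 0\le i\le n-1,\ j\in\{0,1\}\}$ and edges $\{(u_i,j),(u_{i+1},1-j)\}$ (outer edges, forming the set $\mathcal{O}$), $\{(u_i,j),(v_i,1-j)\}$ (spokes, the set $\mathcal{S}$), $\{(v_i,j),(v_{i+k},1-j)\}$ (inner edges, the set $\mathcal{I}$), subscripts mod $n$; it is the canonical double cover of the generalized Petersen graph $\mathrm{GP}(n,k)$. Let $A(n,k)$ be its automorphism group and $C(n,k)$ the subgroup stabilizing each of $\mathcal{O},\mathcal{I},\mathcal{S}$ setwise. Define permutations of the vertex set: $(u_i,j)^\rho=(u_{i+1},j)$, $(v_i,j)^\rho=(v_{i+1},j)$; $(u_i,j)^\delta=(u_{-i},j)$, $(v_i,j)^\delta=(v_{-i},j)$; $(u_i,j)^\beta=(u_i,1-j)$, $(v_i,j)^\beta=(v_i,1-j)$. When $n=4k$ with $k$ even, define $\theta$ by: if $i+j$ is odd, $(u_i,j)^\theta=(u_{i+2k},j)$ and $(v_i,j)^\theta=(v_i,j)$; if $i+j$ is even, $(u_i,j)^\theta=(u_i,j)$ and $(v_i,j)^\theta=(v_{i+2k},j)$. $\mathrm{D}_{2n}$ is the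 dihedral group of order $2n$. *)

From mathcomp Require Import all_boot all_order all_fingroup all_algebra.
From mathcomp Require Import extremal.
Set Implicit Arguments. Unset Strict Implicit. Unset Printing Implicit Defensive.
Import GRing.Theory.
Local Open Scope ring_scope.

(* Vertices of DGP(n,k): inl (i,j) = (u_i, j), inr (i,j) = (v_i, j),
   with i in Z_n and j in {0,1} encoded as bool (false = 0, true = 1);
   1 - j is ~~ j.  The index type 'Z_n is only meaningful for n >= 2;
   the theorem assumes n > 2k >= 2. *)
Definition vert (n : nat) : finType := (('Z_n * bool) + ('Z_n * bool))%type.

Definition uu {n : nat} (i : 'Z_n) (j : bool) : vert n := inl (i, j).
Definition vv {n : nat} (i : 'Z_n) (j : bool) : vert n := inr (i, j).

Definition outerE (n : nat) : {set {set vert n}} :=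
  [set [set uu i j; uu (i + 1) (~~ j)] | i : 'Z_n, j : bool].
Definition spokeE (n : nat) : {set {set vert n}} :=
  [set [set uu i j; vv i (~~ j)] | i : 'Z_n, j : bool].
Definition innerE (n k : nat) : {set {set vert n}} :=
  [set [set vv i j; vv (i + k%:R) (~~ j)] | i : 'Z_n, j : bool].
Definition edgeE (n k : nat) : {set {set vert n}} :=
  outerE n :|: spokeE n :|: innerE n k.

Definition stab_edges (n : nat) (g : {perm vert n}) (F : {set {set vert n}}) : bool :=
  [set (fun x => g x) @: (e : {set vert n}) | e in F] == F.

Definition Aut_DGP (n k : nat) : {set {perm vert n}} :=
  [set g : {perm vert n} | stab_edges g (edgeE n k)].

Definition C_DGP (n k : nat) : {set {perm vert n}} :=
  [set g in Aut_DGP n k |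
     [&& stab_edges g (outerE n), stab_edges g (innerE n k)
       & stab_edges g (spokeE n)]].

(* permutation induced by a function (identity if not injective;
   all functions below are injective under the theorem's hypotheses) *)
Definition mkperm (T : finType) (f : T -> T) : {perm T} :=
  match injectiveP f with
  | ReflectT inj => perm inj
  | ReflectF _ => 1%g
  end.

Definition rho_fun (n : nat) (x : vert n) : vert n :=
  match x with inl (i, j) => uu (i + 1) j | inr (i, j) => vv (i + 1) j end.
Definition delta_fun (n : nat) (x : vert n) : vert n :=
  match x with inl (i, j) => uu (- i) j | inr (i, j) => vv (- i) j end.
Definition beta_fun (n : nat) (x : vert n) : vert n :=
  match x with inl (i, j) => uu i (~~ j) | inr (i, j) => vv i (~~ j) end.
(* theta (for n = 4k, k even): parity of i + j, i taken as its
   representative in {0,..,n-1} (well defined since n is even). *)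
Definition theta_fun (n k : nat) (x : vert n) : vert n :=
  match x with
  | inl (i, j) => if odd (val i + j) then uu (i + (2 * k)%:R) j else uu i j
  | inr (i, j) => if odd (val i + j) then vv i j else vv (i + (2 * k)%:R) j
  end.

Definition rho (n : nat) : {perm vert n} := mkperm (@rho_fun n).
Definition delta (n : nat) : {perm vert n} := mkperm (@delta_fun n).
Definition beta (n : nat) : {perm vert n} := mkperm (@beta_fun n).
Definition theta (n k : nat) : {perm vert n} := mkperm (@theta_fun n k).

From mathcomp Require Import all_boot all_order all_fingroup all_algebra.
From mathcomp Require Import extremal cyclic.
From mathcomp Require Import ring zify.
Set Implicit Arguments. Unset Strict Implicit. Unset Printing Implicit Defensive.
Import GRing.Theory.
Local Open Scope ring_scope.

(* Outer edges join (u_i, j) to (u_(i+-1), 1 - j), so for n even they split the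
   u-vertices into two n-cycles, A = {(u_i, i mod 2)} and B = {(u_i, 1 - i mod 2)}.
   Composing with an element of <rho, delta, beta>, an element g of C(n, k) may be
   assumed to fix (u_0, 0) and (u_1, 1).  It then fixes A pointwise, hence, along
   the spokes, every (v_i, 1 - i mod 2).  As k is even, these include the two inner
   neighbours (v_(i+-k), 1 - i mod 2) of (v_i, i mod 2), so g maps (v_i, i mod 2)
   to itself or to (v_(i+2k), i mod 2) = (v_(i-2k), i mod 2); the latter forces
   n = 4k.  Then no outer edge joins a fixed vertex of B to a shifted one, so
   g = 1 or g = theta.  Finally <delta, rho delta> is dihedral of order 2n, and
   beta is central and outside it. *)

(* Moduli are written m.+2 throughout: 'Z_n is Z/nZ only for n >= 2. *)
Section ZpParity.
Variable m : nat.
Hypothesis m_even : ~~ odd m.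
Local Notation N := m.+2.
Implicit Types a b : 'Z_N.

Lemma odd_ZpD a b : odd (a + b)%R = odd a (+) odd b.
Proof.
by rewrite -[odd _]/(odd ((val a + val b) %% N)%N) odd_mod ?oddD //= negbK (negbTE m_even).
Qed.

Lemma odd_ZpN a : odd (- a)%R = odd a.
Proof.
rewrite -[odd _]/(odd ((N - val a) %% N)%N) odd_mod; last by rewrite /= negbK (negbTE m_even).
by rewrite oddB ?(ltnW (ltn_ord a)) //= negbK (negbTE m_even).
Qed.

Lemma odd_ZpB a b : odd (a - b)%R = odd a (+) odd b.
Proof. by rewrite odd_ZpD odd_ZpN. Qed.

Lemma odd_Zp_nat c : odd (c%:R : 'Z_N) = odd c.
Proof. by rewrite val_Zp_nat // odd_mod /= ?(negbTE m_even). Qed.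

Lemma odd_Zp1 : odd (1%R : 'Z_N).
Proof. by rewrite -(odd_Zp_nat 1). Qed.

Lemma odd_Zp_add_even a c : ~~ odd c -> odd (a + c%:R)%R = odd a.
Proof. by move=> c_even; rewrite odd_ZpD odd_Zp_nat (negbTE c_even) addbF. Qed.

Lemma odd_Zp_sub_even a c : ~~ odd c -> odd (a - c%:R)%R = odd a.
Proof. by move=> c_even; rewrite odd_ZpB odd_Zp_nat (negbTE c_even) addbF. Qed.

End ZpParity.

Lemma Zp_addr_nat_eq m (x : 'Z_m.+2) c : x + c%:R = x -> c = 0%N \/ (m.+2 <= c)%N.
Proof.
move/eqP; rewrite -subr_eq0 addrAC subrr add0r -val_eqE /= val_Zp_nat //.
by case: c => [|c] /dvdn_leq; auto.
Qed.

Lemma set2_eq_cases (T : finType) (x y a b : T) :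
  [set x; y] = [set a; b] -> (x = a /\ y = b) \/ (x = b /\ y = a).
Proof.
move=> E; have xab : x \in [set a; b] by rewrite -E set21.
have yab : y \in [set a; b] by rewrite -E set22.
have axy : a \in [set x; y] by rewrite E set21.
have bxy : b \in [set x; y] by rewrite E set22.
by case/set2P: xab yab axy bxy => -> /set2P[] -> /set2P[] ? /set2P[] ?; subst; auto.
Qed.

Definition vindex n (x : vert n) : 'Z_n := match x with inl (i, _) | inr (i, _) => i end.

Section Edges.
Variables n k : nat.
Implicit Types (i a b : 'Z_n) (j : bool) (x y : vert n).

Lemma outer_edge a b j j' : b = a + 1 -> j' = ~~ j -> [set uu a j; uu b j'] \in outerE n.
Proof. by move=> -> ->; apply/imset2P; exists a j. Qed.

Lemma spoke_edge a b j j' : b = a -> j' = ~~ j -> [set uu a j; vv b j'] \in spokeE n.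
Proof. by move=> -> ->; apply/imset2P; exists a j. Qed.

Lemma inner_edge a b j j' : b = a + k%:R -> j' = ~~ j -> [set vv a j; vv b j'] \in innerE n k.
Proof. by move=> -> ->; apply/imset2P; exists a j. Qed.

Lemma outerE_uu x y : [set x; y] \in outerE n -> exists i j, x = uu i j.
Proof. by case/imset2P=> i j _ _ /set2_eq_cases[[-> _]|[-> _]]; do 2 eexists. Qed.

Lemma outerE_nbr i j y : [set uu i j; y] \in outerE n ->
  y = uu (i + 1) (~~ j) \/ y = uu (i - 1) (~~ j).
Proof.
case/imset2P=> i' j' _ _ /set2_eq_cases[[[-> ->] ->]|[[-> ->] ->]]; first by left.
by right; rewrite addrK negbK.
Qed.

Lemma innerE_nbr i j y : [set vv i j; y] \in innerE n k ->
  y = vv (i + k%:R) (~~ j) \/ y = vv (i - k%:R) (~~ j).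
Proof.
case/imset2P=> i' j' _ _ /set2_eq_cases[[[-> ->] ->]|[[-> ->] ->]]; first by left.
by right; rewrite addrK negbK.
Qed.

Definition spoke_mate x : vert n :=
  match x with inl (i, j) => vv i (~~ j) | inr (i, j) => uu i (~~ j) end.

Lemma spokeE_mate x y : [set x; y] \in spokeE n -> y = spoke_mate x.
Proof. by case/imset2P=> i j _ _ /set2_eq_cases[[-> ->]|[-> ->]] //=; rewrite negbK. Qed.

End Edges.

Section CGroup.
Variables n k : nat.
Implicit Types (g h : {perm vert n}) (F : {set {set vert n}}).

Lemma stab_edges_into g F : (forall e, e \in F -> [set g x | x in e] \in F) -> stab_edges g F.
Proof.
move=> gF; rewrite /stab_edges eqEcard card_imset; last exact/imset_inj/perm_inj.
by rewrite leqnn andbT; apply/subsetP=> _ /imsetP[e eF ->]; apply: gF.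
Qed.

Lemma stab_edges_mem g F e : stab_edges g F -> e \in F -> [set g x | x in e] \in F.
Proof. by move=> /eqP gF eF; rewrite -gF imset_f. Qed.

Lemma stab_edges_set2 g F x y : stab_edges g F -> [set x; y] \in F -> [set g x; g y] \in F.
Proof. by move=> gF /(stab_edges_mem gF); rewrite imsetU1 imset_set1. Qed.

Lemma C_DGPP g : reflect
  [/\ stab_edges g (outerE n), stab_edges g (innerE n k) & stab_edges g (spokeE n)]
  (g \in C_DGP n k).
Proof.
rewrite !inE; apply: (iffP andP) => [[_ /and3P[]] | [gO gI gS]]; first by split.
split; last by apply/and3P.
apply: stab_edges_into => e; rewrite !inE => /orP[/orP[]|] eF.
- by rewrite (stab_edges_mem gO).
- by rewrite (stab_edges_mem gS) ?orbT.
- by rewrite (stab_edges_mem gI) ?orbT.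
Qed.

Lemma C_DGP_group_set : group_set (C_DGP n k).
Proof.
have stab1 F : stab_edges 1 F.
  by apply: stab_edges_into => e eF; rewrite (eq_imset _ (@perm1 _)) imset_id.
have stabM g h F : stab_edges g F -> stab_edges h F -> stab_edges (g * h) F.
  move=> gF hF; apply: stab_edges_into => e eF.
  by rewrite (eq_imset _ (permM g h)) imset_comp !(stab_edges_mem, gF, hF).
apply/group_setP; split=> [|g h /C_DGPP[gO gI gS] /C_DGPP[hO hI hS]].
  by apply/C_DGPP; split.
by apply/C_DGPP; split; apply: stabM.
Qed.

Canonical C_DGP_group := Group C_DGP_group_set.

Lemma C_DGP_outerE g x y : g \in C_DGP n k ->
  [set x; y] \in outerE n -> [set g x; g y] \in outerE n.
Proof. by case/C_DGPP=> gO _ _; apply: stab_edges_set2. Qed.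

Lemma C_DGP_spokeE g x y : g \in C_DGP n k ->
  [set x; y] \in spokeE n -> [set g x; g y] \in spokeE n.
Proof. by case/C_DGPP=> _ _ gS; apply: stab_edges_set2. Qed.

Lemma C_DGP_innerE g x y : g \in C_DGP n k ->
  [set x; y] \in innerE n k -> [set g x; g y] \in innerE n k.
Proof. by case/C_DGPP=> _ gI _; apply: stab_edges_set2. Qed.

Lemma C_DGP_spoke_mate g x : g \in C_DGP n k -> g (spoke_mate x) = spoke_mate (g x).
Proof.
move=> gC; apply: spokeE_mate; apply: C_DGP_spokeE gC _.
by case: x => -[i j]; [apply: spoke_edge | rewrite setUC; apply: spoke_edge; rewrite ?negbK].
Qed.

Lemma C_DGP_eq_on_uu g h : g \in C_DGP n k -> h \in C_DGP n k ->
  (forall i j, g (uu i j) = h (uu i j)) -> g = h.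
Proof.
move=> gC hC gh; apply/permP=> -[[i j]|[i j]]; first exact: gh.
have -> : inr (i, j) = spoke_mate (uu i (~~ j)) by rewrite /= negbK.
by rewrite !C_DGP_spoke_mate // gh.
Qed.

Lemma C_DGP_by_edges g :
  (forall i j, [set g (uu i j); g (uu (i + 1) (~~ j))] \in outerE n) ->
  (forall i j, [set g (uu i j); g (vv i (~~ j))] \in spokeE n) ->
  (forall i j, [set g (vv i j); g (vv (i + k%:R) (~~ j))] \in innerE n k) ->
  g \in C_DGP n k.
Proof.
move=> gO gS gI; apply/C_DGPP; split; apply: stab_edges_into => _ /imset2P[i j _ _ ->];
by rewrite imsetU1 imset_set1.
Qed.

End CGroup.

Lemma mkpermE (T : finType) (f : T -> T) : injective f -> mkperm f =1 f.
Proof. by move=> f_inj x; rewrite /mkperm; case: injectiveP => // ?; rewrite permE. Qed.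

Section Generators.
Variables n k : nat.
Implicit Types (i a b : 'Z_n) (j : bool) (x : vert n).

Lemma rhoE : rho n =1 @rho_fun n.
Proof.
apply/mkpermE/(can_inj (g := fun x : vert n =>
  match x with inl (i, j) => uu (i - 1) j | inr (i, j) => vv (i - 1) j end)).
by case=> -[i j]; rewrite /= addrK.
Qed.

Lemma deltaE : delta n =1 @delta_fun n.
Proof. by apply/mkpermE/(can_inj (g := @delta_fun n)); case=> -[i j]; rewrite /= opprK. Qed.

Lemma betaE : beta n =1 @beta_fun n.
Proof. by apply/mkpermE/(can_inj (g := @beta_fun n)); case=> -[i j]; rewrite /= negbK. Qed.

Lemma rhoX c x : (rho n ^+ c)%g x =
  match x with inl (i, j) => uu (i + c%:R) j | inr (i, j) => vv (i + c%:R) j end.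
Proof.
elim: c => [|c IHc]; first by rewrite expg0 perm1; case: x => -[i j]; rewrite addr0.
by rewrite expgSr permM {}IHc rhoE; case: x => -[i j]; rewrite /= -natr1 addrA.
Qed.

Lemma rho_in_C : rho n \in C_DGP n k.
Proof.
apply: C_DGP_by_edges => i j; rewrite !rhoE /=.
- by apply: outer_edge.
- by apply: spoke_edge.
- by apply: inner_edge; rewrite // addrAC.
Qed.

Lemma delta_in_C : delta n \in C_DGP n k.
Proof.
apply: C_DGP_by_edges => i j; rewrite !deltaE /=.
- by rewrite setUC; apply: outer_edge; rewrite ?negbK // opprD addrNK.
- by apply: spoke_edge.
- by rewrite setUC; apply: inner_edge; rewrite ?negbK // opprD addrNK.
Qed.

Lemma beta_in_C : beta n \in C_DGP n k.
Proof.
apply: C_DGP_by_edges => i j; rewrite !betaE /=.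
- by apply: outer_edge.
- by apply: spoke_edge.
- by apply: inner_edge.
Qed.

End Generators.

Section Theta.
Variables m k : nat.
Hypotheses (m_even : ~~ odd m) (k_even : ~~ odd k).
Local Notation N := m.+2.
Hypothesis N_eq4k : N = (4 * k)%N.
Implicit Types (i : 'Z_N) (j : bool).

Lemma thetaU_fun i j : @theta_fun N k (uu i j) =
  if odd i (+) j then uu (i + (2 * k)%:R) j else uu i j.
Proof. by rewrite /= oddD oddb. Qed.

Lemma thetaV_fun i j : @theta_fun N k (vv i j) =
  if odd i (+) j then vv i j else vv (i + (2 * k)%:R) j.
Proof. by rewrite /= oddD oddb. Qed.

Lemma addr_2k_2k i : i + (2 * k)%:R + (2 * k)%:R = i.
Proof.
have k4_eq0 : (4 * k)%:R = 0 :> 'Z_N.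
  by apply: val_inj; rewrite /= val_Zp_nat // -N_eq4k modnn.
by rewrite -addrA -natrD -mulnDl k4_eq0 addr0.
Qed.

Lemma theta_funK : involutive (@theta_fun N k).
Proof.
case=> -[i j]; [rewrite !thetaU_fun | rewrite !thetaV_fun];
by case: ifP => ji; rewrite ?thetaU_fun ?thetaV_fun ?odd_Zp_add_even ?ji ?addr_2k_2k // oddM.
Qed.

Lemma thetaE : theta N k =1 @theta_fun N k.
Proof. exact/mkpermE/inv_inj/theta_funK. Qed.

Lemma theta_in_C : theta N k \in C_DGP N k.
Proof.
apply: C_DGP_by_edges => i j; rewrite !thetaE.
- rewrite !thetaU_fun odd_ZpD // odd_Zp1 // addbT addbN addNb negbK.
  by case: ifP => _; apply: outer_edge; rewrite // addrAC.
- by rewrite thetaU_fun thetaV_fun addbN; case: ifP => _; apply: spoke_edge.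
- rewrite !thetaV_fun odd_Zp_add_even // addbN; case: ifP => _; rewrite setUC.
    by apply: inner_edge; rewrite ?negbK // -{1}(addr_2k_2k i) !natrM; ring.
  by apply: inner_edge; rewrite ?negbK // !natrM; ring.
Qed.

End Theta.

Section Rigidity.
Variables m k : nat.
Hypotheses (m_even : ~~ odd m) (k_even : ~~ odd k).
Hypotheses (k_gt0 : (0 < k)%N) (k2_lt : (2 * k < m.+2)%N).
Local Notation N := m.+2.
Implicit Types (i : 'Z_N) (j : bool) (h : {perm vert N}).

Lemma k_ge2 : (2 <= k)%N.
Proof. by case: k k_gt0 k_even => [|[|]]. Qed.

Lemma addr_4k_eq i : i + (4 * k)%:R = i -> N = (4 * k)%N.
Proof.
move=> /[dup] /Zp_addr_nat_eq k4N.
have [N_le4k|] := leqP N (4 * k); last by case: k4N; lia.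
rewrite -(subnKC N_le4k) natrD pchar_Zp // add0r => /Zp_addr_nat_eq.
by case; lia.
Qed.

Lemma fix_cycleA h : h \in C_DGP N k ->
  h (uu 0 false) = uu 0 false -> h (uu 1 true) = uu 1 true ->
  forall i, h (uu i (odd i)) = uu i (odd i).
Proof.
move=> hC h0 h1; pose a c := @uu N c%:R (odd c).
suff fix_a c : h (a c) = a c /\ h (a c.+1) = a c.+1.
  by move=> i; case: (fix_a i); rewrite /a natr_Zp.
elim: c => [|c [IHc IHc1]]; first by rewrite /a mulr0n mulr1n.
split=> //.
have /(C_DGP_outerE hC) : [set a c.+1; a c.+2] \in outerE N.
  by apply: outer_edge; rewrite // -natr1.
rewrite IHc1 => /outerE_nbr[-> | hc2]; first by rewrite /a natr1.
have : h (a c.+2) = h (a c) by rewrite IHc hc2 /a -natr1 addrK /= negbK.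
move=> /perm_inj[+ _]; rewrite -[c.+2]addn2 natrD => /Zp_addr_nat_eq c2.
by exfalso; have := k_ge2; case: c2; lia.
Qed.

Lemma fix_inner_nbrs h i : h \in C_DGP N k ->
  (forall i, h (uu i (odd i)) = uu i (odd i)) ->
  h (vv (i + k%:R) (~~ odd i)) = vv (i + k%:R) (~~ odd i) /\
  h (vv (i - k%:R) (~~ odd i)) = vv (i - k%:R) (~~ odd i).
Proof.
move=> hC fix_a; have fix_v i' : h (vv i' (~~ odd i')) = vv i' (~~ odd i').
  by rewrite -[vv _ _]/(spoke_mate (uu i' (odd i'))) (C_DGP_spoke_mate _ hC) fix_a.
by have := fix_v (i + k%:R); have := fix_v (i - k%:R);
  rewrite odd_Zp_add_even ?odd_Zp_sub_even.
Qed.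

Lemma fix_or_shift_cycleB h i : h \in C_DGP N k ->
  (forall i, h (uu i (odd i)) = uu i (odd i)) ->
  h (uu i (~~ odd i)) = uu i (~~ odd i) \/
  N = (4 * k)%N /\ h (uu i (~~ odd i)) = uu (i + (2 * k)%:R) (~~ odd i).
Proof.
move=> hC fix_a; have [fix_vk fix_vNk] := fix_inner_nbrs i hC fix_a.
have mateE : h (uu i (~~ odd i)) = spoke_mate (h (vv i (odd i))).
  by rewrite -(C_DGP_spoke_mate _ hC).
have /(C_DGP_innerE hC) : [set vv (i + k%:R) (~~ odd i); vv i (odd i)] \in innerE N k.
  by rewrite setUC; apply: inner_edge.
have /(C_DGP_innerE hC) : [set vv (i - k%:R) (~~ odd i); vv i (odd i)] \in innerE N k.
  by apply: inner_edge; rewrite ?subrK ?negbK.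
rewrite fix_vk fix_vNk mateE => /innerE_nbr[hx _ | hx_sub].
  by left; rewrite hx /= subrK !negbK.
case/innerE_nbr=> hx_add; last by left; rewrite hx_add /= addrK !negbK.
right; split.
  apply: (@addr_4k_eq (i - k%:R - k%:R)).
  move: hx_add; rewrite hx_sub => /(congr1 (@vindex _)) /= E.
  by rewrite {2}E natrM; ring.
by rewrite hx_add /= !negbK; congr uu; rewrite natrM; ring.
Qed.

(* The indices of the endpoints would differ by 2k + 1 = 1 - 2k, which is not +-1. *)
Lemma outerE_notin_shift a j j' : N = (4 * k)%N ->
  [set uu a j; uu (a + (2 * k).+1%:R) j'] \notin outerE N.
Proof.
move=> N4k; have k2 := k_ge2; apply/negP => /outerE_nbr[] /(congr1 (@vindex _)) /=.
  by rewrite -natr1 addrA => /addIr/Zp_addr_nat_eq; lia.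
by move=> /(congr1 (+%R^~ 1)); rewrite subrK -addrA natr1 => /Zp_addr_nat_eq; lia.
Qed.

Lemma cycleB_fixed_const h : h \in C_DGP N k ->
  (forall i, h (uu i (odd i)) = uu i (odd i)) -> N = (4 * k)%N ->
  forall i, (h (uu i (~~ odd i)) == uu i (~~ odd i)) = (h (uu 0 true) == uu 0 true).
Proof.
move=> hC fix_a N4k; pose fixed i := h (uu i (~~ odd i)) == uu i (~~ odd i).
have shifted i : ~~ fixed i -> h (uu i (~~ odd i)) = uu (i + (2 * k)%:R) (~~ odd i).
  by rewrite /fixed; case: (fix_or_shift_cycleB i hC fix_a) => [-> | [_ ->]]; rewrite ?eqxx.
have fixedS i : fixed (i + 1) = fixed i.
  have /(C_DGP_outerE hC) :
      [set uu i (~~ odd i); uu (i + 1) (~~ odd (i + 1)%R)] \in outerE N.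
    by apply: outer_edge; rewrite // odd_ZpD // odd_Zp1 // addbT.
  case: (boolP (fixed i)) => [/eqP -> | /shifted ->];
    case: (boolP (fixed (i + 1))) => [/eqP -> | /shifted ->] //.
    by rewrite -addrA [1 + _]addrC natr1 (negbTE (outerE_notin_shift _ _ _ N4k)).
  have -> : i + 1 = i + (2 * k)%:R + (2 * k).+1%:R by rewrite -natr1 !addrA addr_2k_2k.
  by rewrite (negbTE (outerE_notin_shift _ _ _ N4k)).
move=> i; change (fixed i = fixed 0); rewrite -(natr_Zp i).
by elim: (val i) => [|c IHc]; rewrite ?mulr0n // -natr1 fixedS.
Qed.

Lemma C_DGP_base_stabilizer h : h \in C_DGP N k ->
  h (uu 0 false) = uu 0 false -> h (uu 1 true) = uu 1 true ->
  h = 1%g \/ N = (4 * k)%N /\ h = theta N k.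
Proof.
move=> hC h0 h1; have fix_a := fix_cycleA hC h0 h1.
have cross i := fix_or_shift_cycleB i hC fix_a.
have oddP i j : j = odd i \/ j = ~~ odd i by case: j; case: (odd i); auto.
have C1 := group1 (C_DGP_group N k).
have [N4k | N4k] := eqVneq N (4 * k)%N; last first.
  left; apply: (C_DGP_eq_on_uu hC C1) => i j; rewrite perm1.
  case: (oddP i j) => ->; first exact: fix_a.
  by case: (cross i) => // -[/eqP]; rewrite (negbTE N4k).
have fixed_all := cycleB_fixed_const hC fix_a N4k.
case: (boolP (h (uu 0 true) == uu 0 true)) => fixed0.
  left; apply: (C_DGP_eq_on_uu hC C1) => i j; rewrite perm1.
  by case: (oddP i j) => ->; [exact: fix_a | apply/eqP; rewrite fixed_all].
right; split=> //; apply: (C_DGP_eq_on_uu hC (theta_in_C m_even k_even N4k)) => i j.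
rewrite thetaE // thetaU_fun; case: (oddP i j) => ->; first by rewrite addbb fix_a.
rewrite addbN addbb /=; case: (cross i) => [/eqP | [_ ->] //].
by rewrite fixed_all (negbTE fixed0).
Qed.

End Rigidity.

Section Generation.
Variables n k : nat.
Local Notation RDB := <<[set rho n; delta n; beta n]>>%g.

Lemma RDB_sub_C : RDB \subset C_DGP n k.
Proof.
rewrite gen_subG; apply/subsetP => x /setUP[/set2P[] | /set1P] ->;
by rewrite ?rho_in_C ?delta_in_C ?beta_in_C.
Qed.

Lemma C_DGP_normalize g : g \in C_DGP n k -> exists2 p, p \in RDB &
  (g * p)%g (uu 0 false) = uu 0 false /\ (g * p)%g (uu 1 true) = uu 1 true.
Proof.
move=> gC; have [rRDB dRDB bRDB] : [/\ rho n \in RDB, delta n \in RDB & beta n \in RDB].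
  by split; apply: mem_gen; rewrite !inE eqxx ?orbT.
have e01 : [set @uu n 0 false; uu 1 true] \in outerE n by apply: outer_edge; rewrite ?add0r.
have [i [j g0]] := outerE_uu (C_DGP_outerE gC e01).
pose p := ((rho n ^+ val i)^-1 * (if j then beta n else 1))%g.
have pRDB : p \in RDB by rewrite groupM ?groupV ?groupX //; case: (j).
have gpC : (g * p)%g \in C_DGP n k by rewrite groupM // (subsetP RDB_sub_C).
have gp0 : (g * p)%g (uu 0 false) = uu 0 false.
  have rhoXi : (rho n ^+ val i)%g (uu 0 j) = uu i j by rewrite rhoX /= add0r natr_Zp.
  by rewrite permM g0 -rhoXi permM permK; case: (j); rewrite ?betaE ?perm1.
have := C_DGP_outerE gpC e01; rewrite gp0 => /outerE_nbr[i1 | i1].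
  by exists p; rewrite // i1 add0r.
exists (p * delta n)%g; first by rewrite groupM.
by rewrite mulgA !(permM (g * p)%g) gp0 i1 !deltaE /= oppr0 sub0r opprK.
Qed.

End Generation.

Section CEquality.
Variables m k : nat.
Hypotheses (m_even : ~~ odd m) (k_even : ~~ odd k).
Hypotheses (k_gt0 : (0 < k)%N) (k2_lt : (2 * k < m.+2)%N).
Local Notation N := m.+2.
Local Notation RDB := <<[set rho N; delta N; beta N]>>%g.
Local Notation RDBT := <<[set rho N; delta N; beta N; theta N k]>>%g.

Lemma C_DGP_elements g : g \in C_DGP N k ->
  exists2 p, p \in RDB & g = p \/ N = (4 * k)%N /\ g = (theta N k * p)%g.
Proof.
move=> gC; have [p pRDB [gp0 gp1]] := C_DGP_normalize gC.
have gpC : (g * p)%g \in C_DGP N k by rewrite groupM // (subsetP (RDB_sub_C N k)).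
exists p^-1%g; first by rewrite groupV.
rewrite -[g](mulgK p).
by case: (C_DGP_base_stabilizer m_even k_even k_gt0 k2_lt gpC gp0 gp1) => [-> | [N4k ->]];
  [left; rewrite mul1g | right].
Qed.

Lemma C_DGP_eq_RDB : N != (4 * k)%N -> C_DGP N k = RDB.
Proof.
move=> N4k; apply/eqP; rewrite eqEsubset RDB_sub_C andbT.
apply/subsetP => g /C_DGP_elements[p pRDB [-> // | [/eqP]]].
by rewrite (negbTE N4k).
Qed.

Lemma C_DGP_eq_RDBT : N = (4 * k)%N -> C_DGP N k = RDBT.
Proof.
move=> N4k; apply/eqP; rewrite eqEsubset; apply/andP; split.
  have RDB_sub : RDB \subset RDBT by apply/genS/subsetUl.
  have thetaT : theta N k \in RDBT by rewrite mem_gen // !inE eqxx orbT.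
  apply/subsetP => g /C_DGP_elements[p /(subsetP RDB_sub) pT [-> // | [_ ->]]].
  by rewrite groupM.
rewrite gen_subG; apply/subsetP => x /setUP[x3 | /set1P ->].
  by rewrite (subsetP (RDB_sub_C N k)) ?mem_gen.
exact: theta_in_C.
Qed.

End CEquality.

Section DirectProduct.
Variable m : nat.
Hypothesis m_gt0 : (0 < m)%N.
Local Notation N := m.+2.
Local Notation D := <<[set delta N; (rho N * delta N)%g]>>%g.
Local Notation R := <[rho N]>%g.

Lemma rhoX_eq1 c : (c%:R : 'Z_N) = 0 -> (rho N ^+ c = 1)%g.
Proof.
by move=> c0; apply/permP => x; rewrite rhoX perm1 c0; case: x => -[i j]; rewrite addr0.
Qed.

Lemma order_rho : #[rho N]%g = N.
Proof.
apply/eqP; rewrite eqn_dvd order_dvdn rhoX_eq1 ?pchar_Zp // eqxx.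
have /permP/(_ (uu 0 false)) := expg_order (rho N).
rewrite rhoX perm1 /= add0r => /(congr1 (@vindex _)) /= /eqP.
by rewrite -val_eqE /= val_Zp_nat.
Qed.

Lemma order_delta : #[delta N]%g = 2.
Proof.
apply: nt_prime_order => //.
  apply/permP => x; rewrite expgS expg1 permM perm1 !deltaE.
  by case: x => -[i j]; rewrite /= opprK.
apply/eqP => /permP/(_ (uu 1 false)); rewrite perm1 deltaE /= => /(congr1 (@vindex _)) /= E.
have : -1 + 2%:R = -1 :> 'Z_N by rewrite [RHS]E; ring.
by move/Zp_addr_nat_eq; lia.
Qed.

Lemma order_beta : #[beta N]%g = 2.
Proof.
apply: nt_prime_order => //.
  apply/permP => x; rewrite expgS expg1 permM perm1 !betaE.
  by case: x => -[i j]; rewrite /= negbK.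
by apply/eqP => /permP/(_ (uu 0 false)); rewrite perm1 betaE.
Qed.

Lemma order_rho_delta : #[rho N * delta N]%g = 2.
Proof.
apply: nt_prime_order => //.
  apply/permP => x; rewrite expgS expg1 !permM perm1 !deltaE !rhoE.
  by case: x => -[i j]; rewrite /= opprD opprK addrK.
apply/eqP => /permP/(_ (uu 0 false)); rewrite permM perm1 rhoE deltaE /= add0r.
by move=> /(congr1 (@vindex _)) /= /eqP; rewrite oppr_eq0 oner_eq0.
Qed.

Lemma delta_neq_rho_delta : delta N != (rho N * delta N)%g.
Proof.
apply/eqP; rewrite -{1}[delta N]mul1g => /mulIg/permP/(_ (uu 0 false)).
by rewrite perm1 rhoE /= add0r => /(congr1 (@vindex _)) /= /eqP; rewrite eq_sym oner_eq0.
Qed.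

Lemma delta_notin_R : delta N \notin R.
Proof.
apply/cycleP => -[c dE].
have /permP/(_ (uu 0 false)) := dE; rewrite deltaE rhoX /= oppr0 add0r.
move=> /(congr1 (@vindex _)) /= /esym/rhoX_eq1; rewrite -dE => d1.
by have := order_delta; rewrite d1 order1.
Qed.

Lemma delta_normalizes_R : delta N \in 'N(R)%g.
Proof.
have rho_delta2 := expg_order (rho N * delta N).
rewrite order_rho_delta expgS expg1 in rho_delta2.
apply/normP; rewrite -cycleJ -[RHS]cycleV; congr <[_]>%g; apply/esym/eqP.
by rewrite eq_invg_mul conjgE invg2id ?order_delta // mulgA rho_delta2.
Qed.

Lemma delta_in_D : delta N \in D.
Proof. by rewrite mem_gen // !inE eqxx. Qed.

Lemma rho_in_D : rho N \in D.
Proof.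
have rdelta_D : (rho N * delta N)%g \in D by rewrite mem_gen // !inE eqxx orbT.
by have := groupM rdelta_D (groupVr delta_in_D); rewrite mulgK.
Qed.

Lemma D_eq_RmulDelta : D = (R * <[delta N]>)%g.
Proof.
apply/eqP; rewrite eqEsubset mulG_subG !cycle_subG rho_in_D delta_in_D !andbT.
have nRd : <[delta N]>%g \subset 'N(R)%g by rewrite cycle_subG delta_normalizes_R.
rewrite -(norm_joinEr nRd) gen_subG.
have [rJ dJ] : rho N \in (R <*> <[delta N]>)%g /\ delta N \in (R <*> <[delta N]>)%g.
  by split; apply: mem_gen; rewrite inE cycle_id ?orbT.
by apply/subsetP => x /set2P[] ->; rewrite ?groupM.
Qed.

Lemma card_D : #|D| = (2 * N)%N.
Proof.
rewrite D_eq_RmulDelta TI_cardMg; first by rewrite -!orderE order_rho order_delta mulnC.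
apply/trivgP/subsetP => x /setIP[xR]; rewrite /= cycle2g ?order_delta // => /set2P[-> // | xd].
by move: xR; rewrite xd (negbTE delta_notin_R).
Qed.

Lemma beta_notin_D : beta N \notin D.
Proof.
rewrite D_eq_RmulDelta; apply/mulsgP => -[r d /cycleP[c ->]].
rewrite /= cycle2g ?order_delta // => /set2P[] -> /permP/(_ (uu 0 false));
by rewrite permM rhoX betaE ?perm1 ?deltaE => -[].
Qed.

Lemma D_sub_cent_beta : D \subset 'C[beta N]%g.
Proof.
rewrite gen_subG; apply/subsetP => x /set2P[] ->; apply/cent1P/permP;
by case=> -[i j]; rewrite !permM ?rhoE ?deltaE ?betaE.
Qed.

Lemma RDB_dprod : (D \x <[beta N]>)%g = <<[set rho N; delta N; beta N]>>%g.
Proof.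
rewrite dprodEY; last first.
- apply/trivgP/subsetP => x /setIP[xD].
  rewrite /= cycle2g ?order_beta // => /set2P[-> // | xb].
  by move: xD; rewrite xb (negbTE beta_notin_D).
- by rewrite centsC cent_cycle D_sub_cent_beta.
apply/eqP; rewrite eqEsubset /= join_subG -andbA; apply/and3P; split.
- rewrite gen_subG; apply/subsetP => x /set2P[] ->;
  by rewrite ?groupM ?mem_gen ?inE ?eqxx ?orbT.
- by rewrite cycle_subG mem_gen ?inE ?eqxx ?orbT.
rewrite gen_subG; apply/subsetP => x /setUP[/set2P[] | /set1P] ->.
- exact: (subsetP (joing_subl _ _)) rho_in_D.
- exact: (subsetP (joing_subl _ _)) delta_in_D.
- exact: (subsetP (joing_subr _ _)) (cycle_id _).
Qed.

Lemma RDB_isog : (<<[set rho N; delta N; beta N]>> \isog [set: ('D_(2 * N) * 'Z_2)%type])%g.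
Proof.
have D_isog : D \isog [set: 'D_(2 * N)].
  rewrite -card_D; apply: involutions_gen_dihedral.
  - exact: order_delta.
  - exact: order_rho_delta.
  - exact: delta_neq_rho_delta.
have B_isog : <[beta N]>%g \isog [set: 'Z_2].
  rewrite isog_cyclic_card ?cycle_cyclic // cardsT card_ord -orderE order_beta eqxx andbT.
  by rewrite prime_cyclic // cardsT card_ord.
have -> : [set: ('D_(2 * N) * 'Z_2)%type] = setX [set: 'D_(2 * N)] [set: 'Z_2].
  by apply/setP => -[x y]; rewrite !inE.
apply: (isog_dprod RDB_dprod (setX_dprod [set: 'D_(2 * N)]%G [set: 'Z_2]%G)).
  by apply: isog_trans D_isog _; apply: isog_setX1.
by apply: isog_trans B_isog _; apply: isog_set1X.
Qed.

End DirectProduct.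

Local Close Scope ring_scope.

Theorem proposition5p2 (n k : nat) :
  ~~ odd n -> ~~ odd k -> (1 <= k)%N -> (2 * k < n)%N ->
  (n != 4 * k ->
     C_DGP n k = <<[set rho n; delta n; beta n]>>%g
     /\ (C_DGP n k \isog [set: ('D_(2 * n) * 'Z_2)%type])%g) /\
  (n = 4 * k ->
     C_DGP n k = <<[set rho n; delta n; beta n; theta n k]>>%g).
Proof.
move=> + k_even k_gt0; case: n => [|[|m]] // n_even k2_lt.
have m_even : ~~ odd m by rewrite /= negbK in n_even.
have m_gt0 : 0 < m by lia.
split=> N4k; last exact: C_DGP_eq_RDBT.
by rewrite C_DGP_eq_RDB //; split=> //; apply: RDB_isog.
Qed.
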